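(* Let $k\geq1$, $n\geq2k$, and let $\mathcal{S}$ be an antichain in $\mathcal{F}=\mathcal{F}_{2k}^{[1,n]}$ that contains the set $[1,2]\cup[n-2k+3,n]$. Then $B_{\mathcal{S}}$ is $(k-1)$-neighborly w.r.t. $[n]$.
   Context: Notation: $[m,n]=\{m,\dots,n\}$; $2k$-subsets of $[n]$ are identified with increasing vectors, and $\leq_p$ is the componentwise order. $\mathcal{F}_{2k}^{[1,n]}$ is the set of sets $\{i_1,i_1+1,\dots,i_k,i_k+1\}$ with $1\leq i_1$, $i_k\leq n-1$, $i_j\leq i_{j+1}-2$, ordered by $\leq_p$. $\mathcal{F}(\mathcal{S})$ is the order ideal generated by an antichain $\mathcal{S}$, $B(\mathcal{S})$ the pure complex whose facets are the sets of $\mathcal{F}(\mathcal{S})$, $\mathcal{S}-\mathbf{1}_{2k}=\{x-\mathbf{1}_{2k}: x\in\mathcal{S},\min x>1\}$, and $B_{\mathcal{S}}$ is the complex generated by the facets of $B(\mathcal{S})$ that are not facets of $B(\mathcal{S}-\mathbf{1}_{2k})$. A complex is $i$-neighborly w.r.t. $V$ if every subset of $V$ of size at most $i$ is a face. *)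

From mathcomp Require Import all_boot.
Set Implicit Arguments. Unset Strict Implicit. Unset Printing Implicit Defensive.

(* 2k-subsets of [n] are represented by their increasing vectors (seq nat). *)

Definition pairs_of (i : seq nat) : seq nat :=
  flatten [seq [:: a; a.+1] | a <- i].

Definition inF (k n : nat) (x : seq nat) : Prop :=
  exists i : seq nat,
    [/\ size i = k,
        (forall j, j < k -> 1 <= nth 0 i j /\ nth 0 i j <= n - 1),
        (forall j, j.+1 < k -> nth 0 i j <= nth 0 i j.+1 - 2)
      & x = pairs_of i].

Definition le_p (x y : seq nat) : Prop :=
  size x = size y /\ forall j, j < size x -> nth 0 x j <= nth 0 y j.

Definition antichainF (k n : nat) (S : seq nat -> Prop) : Prop :=
  (forall x, S x -> inF k n x) /\
  (forall x y, S x -> S y -> le_p x y -> x = y).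

Definition idealF (k n : nat) (S : seq nat -> Prop) (y : seq nat) : Prop :=
  inF k n y /\ exists2 x, S x & le_p y x.

Definition shift1 (S : seq nat -> Prop) (z : seq nat) : Prop :=
  exists2 x, S x & (forall a, a \in x -> 1 < a) /\ z = [seq a.-1 | a <- x].

(* facets of B_S: facets of B(S) (= sets of F(S)) not facets of B(S - 1_{2k}) *)
Definition facetB_S (k n : nat) (S : seq nat -> Prop) (x : seq nat) : Prop :=
  idealF k n S x /\ ~ idealF k n (shift1 S) x.

Definition face_of (facet : seq nat -> Prop) (sigma : seq nat) : Prop :=
  exists2 x, facet x & {subset sigma <= x}.

Definition neighborly (i n : nat) (face : seq nat -> Prop) : Prop :=
  forall sigma : seq nat, uniq sigma ->
    (forall a, a \in sigma -> 1 <= a <= n) -> size sigma <= i -> face sigma.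

(* Every set of F is pairs_of i for a vector i of "starting points"
   i_1 < ... < i_k with gaps >= 2 (predicate [starts]).  Let sigma be a set
   of at most k-1 points of [n].
   1. Covering: sigma is contained in pairs_of i for some such i with
      i_1 = 1, and pairs_of i <=_p x0, so pairs_of i lies in F(S).
   2. Descent: if pairs_of i is in F(S) but not a facet of B_S, then it lies
      below some x - 1 with x in S, i.e. i < j componentwise where
      x = pairs_of j.  Since sigma has fewer than k points, some i_{t0} is not
      in sigma; incrementing the maximal run of consecutive starting points
      t0..t1 with gaps exactly 2 yields a new vector i' <= j that still covers
      sigma and has a strictly smaller [deficit] sum_t (n - i_t).
   Iterating 2 (well-founded on the deficit) ends at a facet of B_S
   containing sigma. *)

From mathcomp Require Import all_boot zify.
From Stdlib Require Import Classical.
Set Implicit Arguments. Unset Strict Implicit. Unset Printing Implicit Defensive.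

Lemma pairs_of_cons a i : pairs_of (a :: i) = a :: a.+1 :: pairs_of i.
Proof. by []. Qed.

Lemma size_pairs_of i : size (pairs_of i) = 2 * size i.
Proof. by elim: i => // a i IH; rewrite pairs_of_cons /= IH; lia. Qed.

Lemma nth_pairs_of i p : p < 2 * size i ->
  nth 0 (pairs_of i) p = nth 0 i (p %/ 2) + p %% 2.
Proof.
elim: i p => [|a i IH] [|[|p]] //= p_lt; rewrite ?addn0 ?addn1 //.
rewrite IH; last by lia.
have -> : p.+2 %/ 2 = (p %/ 2).+1 by lia.
by have -> : p.+2 %% 2 = p %% 2 by lia.
Qed.

Lemma nth_pairs_of_even i t : t < size i -> nth 0 (pairs_of i) (2 * t) = nth 0 i t.
Proof.
move=> t_lt; rewrite nth_pairs_of; last by lia.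
have -> : 2 * t %/ 2 = t by lia.
have -> : 2 * t %% 2 = 0 by lia.
by rewrite addn0.
Qed.

Lemma nth_pairs_of_odd i t : t < size i -> nth 0 (pairs_of i) (2 * t).+1 = (nth 0 i t).+1.
Proof.
move=> t_lt; rewrite nth_pairs_of; last by lia.
have -> : (2 * t).+1 %/ 2 = t by lia.
have -> : (2 * t).+1 %% 2 = 1 by lia.
by rewrite addn1.
Qed.

Lemma mem_pairs_of i a : a \in pairs_of i ->
  exists2 t, t < size i & a = nth 0 i t \/ a = (nth 0 i t).+1.
Proof.
move=> /(nthP 0) [p]; rewrite size_pairs_of => p_lt <-.
exists (p %/ 2); first by lia.
rewrite nth_pairs_of //; have : p %% 2 < 2 by lia.
by case: (p %% 2) => [|[|]] // _; [left | right]; lia.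
Qed.

Lemma pairs_of_mem i t : t < size i ->
  nth 0 i t \in pairs_of i /\ (nth 0 i t).+1 \in pairs_of i.
Proof.
move=> t_lt; split; apply/(nthP 0).
- by exists (2 * t); [rewrite size_pairs_of; lia | rewrite nth_pairs_of_even].
- by exists (2 * t).+1; [rewrite size_pairs_of; lia | rewrite nth_pairs_of_odd].
Qed.

Lemma le_p_pairs_of i j : size i = size j ->
  (forall t, t < size i -> nth 0 i t <= nth 0 j t) -> le_p (pairs_of i) (pairs_of j).
Proof.
move=> eq_size le_ij; split; first by rewrite !size_pairs_of eq_size.
move=> p; rewrite size_pairs_of => p_lt.
by rewrite !nth_pairs_of -?eq_size // leq_add2r le_ij //; lia.
Qed.

Lemma le_p_shifted_pairs_of i j t : size i = size j ->
  le_p (pairs_of i) [seq a.-1 | a <- pairs_of j] ->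
  t < size i -> 0 < nth 0 i t -> nth 0 i t < nth 0 j t.
Proof.
move=> eq_size [_ le_ij] t_lt i_pos.
have := le_ij (2 * t); rewrite size_pairs_of (nth_map 0); last first.
  by rewrite size_pairs_of -eq_size; lia.
by rewrite !nth_pairs_of_even -?eq_size //; lia.
Qed.

Definition starts (k lo n : nat) (i : seq nat) : Prop :=
  [/\ size i = k,
      (forall t, t < k -> lo <= nth 0 i t <= n - 1)
    & (forall t, t.+1 < k -> nth 0 i t + 2 <= nth 0 i t.+1)].

Lemma starts_inF k n i : starts k 1 n i -> inF k n (pairs_of i).
Proof.
case=> size_i bound gap; exists i; split=> // t t_lt.
  by have := bound t t_lt; lia.
by have := gap t t_lt; lia.
Qed.

Lemma starts_gap k lo n i t u : starts k lo n i -> t <= u -> u < k ->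
  nth 0 i t + 2 * (u - t) <= nth 0 i u.
Proof.
case=> _ _ gap; elim: u => [|u IH] t_le u_lt.
  by rewrite leqn0 in t_le; rewrite (eqP t_le); lia.
rewrite leq_eqVlt in t_le; case/predU1P: t_le => [->|t_le]; first by lia.
by have := IH t_le (ltnW u_lt); have := gap u u_lt; lia.
Qed.

Lemma starts_uniq k lo n i : starts k lo n i -> uniq i.
Proof.
move=> st; have [size_i _ _] := st.
apply/(uniqP 0) => t u; rewrite !inE size_i => t_lt u_lt.
change (nth 0 i t = nth 0 i u :> nat -> t = u) => eq_tu.
case: (ltngtP t u) => // [tu | ut].
- by have := starts_gap st (ltnW tu) u_lt; rewrite eq_tu; lia.
- by have := starts_gap st (ltnW ut) t_lt; rewrite eq_tu; lia.
Qed.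

Lemma starts_top k lo n i t : starts k lo n i -> t < k ->
  nth 0 i t + 2 * (k.-1 - t) <= n - 1.
Proof.
move=> st t_lt; have [_ bound _] := st.
have t_le : t <= k.-1 by lia.
have top_lt : k.-1 < k by lia.
by have := starts_gap st t_le top_lt; have := bound _ top_lt; lia.
Qed.

Lemma starts_cons k lo lo' n i : lo + 2 <= lo' -> lo <= n - 1 ->
  starts k lo' n i -> starts k.+1 lo n (lo :: i).
Proof.
move=> lo_lt lo_le [size_i bound gap]; split; first by rewrite /= size_i.
- by case=> [|t] /= t_lt; [lia | have := bound t t_lt; lia].
- by case=> [|t] /= t_lt; [have := bound 0 t_lt; lia | exact: gap].
Qed.

Lemma starts_weaken k lo lo' n i : lo' <= lo -> starts k lo n i -> starts k lo' n i.
Proof. by move=> lo_le [size_i bound gap]; split=> // t /bound; lia. Qed.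

Definition progression (a m : nat) : seq nat := [seq a + 2 * t | t <- iota 0 m].

Lemma progression_cons a m : progression a m.+1 = a :: progression (a + 2) m.
Proof.
rewrite /progression /= addn0 -(addn0 1) iotaDl -map_comp.
by congr (_ :: _); apply: eq_map => t /=; lia.
Qed.

Lemma pairs_of_progression a m : pairs_of (progression a m) = iota a (2 * m).
Proof.
elim: m a => [|m IH] a //; rewrite progression_cons pairs_of_cons IH.
have -> : 2 * m.+1 = (2 * m).+2 by lia.
by rewrite addn2.
Qed.

Lemma starts_progression k lo n : 0 < lo -> lo + 2 * k <= n.+1 ->
  starts k lo n (progression lo k).
Proof.
move=> lo_pos lo_le; split; first by rewrite size_map size_iota.
- by move=> t t_lt; rewrite (nth_map 0) ?size_iota // nth_iota //; lia.
- by move=> t t_lt; rewrite !(nth_map 0) ?size_iota // ?nth_iota //; lia.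
Qed.

(* Greedily start a pair at lo if lo is needed, skip lo otherwise, and use
   the tight progression once the room is exhausted. *)
Lemma cover_by_starts n k lo s : 0 < lo -> lo + 2 * k <= n.+1 ->
  (forall a, a \in s -> lo <= a <= n) -> size s <= k ->
  exists2 i, starts k lo n i & {subset s <= pairs_of i}.
Proof.
have [d d_gt] := ubnP (n.+1 - lo).
elim: d k lo s d_gt => // d IH k lo s d_gt lo_pos room s_range s_size.
have [room_eq | room_lt] := eqVneq (lo + 2 * k) n.+1.
  exists (progression lo k); first exact: starts_progression.
  by move=> a /s_range a_range; rewrite pairs_of_progression mem_iota; lia.
case: k room room_lt s_size => [|k] room room_ne s_size.
  by exists [::]; [split | case: s s_size s_range].
have [lo_in | lo_out] := boolP (lo \in s).
- pose s' := [seq a <- s | lo.+1 < a].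
  have s'_size : size s' <= k.
    have : size s' < size s.
      rewrite size_filter -(count_predC (fun a => lo.+1 < a) s) -addn1 leq_add2l.
      by rewrite -has_count; apply/hasP; exists lo => //=; rewrite -leqNgt.
    lia.
  have s'_range a : a \in s' -> lo.+2 <= a <= n.
    by rewrite mem_filter => /andP [a_gt /s_range]; lia.
  have [i st_i cover_i] := IH k lo.+2 s' ltac:(lia) ltac:(lia) ltac:(lia) s'_range s'_size.
  exists (lo :: i); first by apply: starts_cons st_i; lia.
  move=> a a_in; rewrite pairs_of_cons !inE.
  case: (ltnP lo.+1 a) => [a_gt | a_le].
    by rewrite cover_i ?orbT // mem_filter a_gt.
  by have := s_range a a_in; case: (ltngtP a lo); lia.
- have s_range' a : a \in s -> lo.+1 <= a <= n.
    move=> a_in; have := s_range a a_in; have : a != lo by apply: contraNneq lo_out => <-.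
    lia.
  have [i st_i cover_i] := IH k.+1 lo.+1 s ltac:(lia) ltac:(lia) ltac:(lia) s_range' s_size.
  by exists i => //; apply: starts_weaken st_i.
Qed.

(* The potential of the descent: it strictly decreases when a starting point moves up. *)
Definition deficit (n k : nat) (i : seq nat) : nat := \sum_(t < k) (n - nth 0 i t).

Definition tight_run (k : nat) (i : seq nat) (t0 t1 : nat) : Prop :=
  [/\ t0 <= t1 < k,
      (forall s, t0 <= s < t1 -> nth 0 i s.+1 = nth 0 i s + 2)
    & (t1.+1 < k -> nth 0 i t1 + 3 <= nth 0 i t1.+1)].

(* Take t1 the least index >= t0 followed by a gap of at least 3 (or the last). *)
Lemma exists_tight_run k lo n i t0 : starts k lo n i -> t0 < k ->
  exists t1, tight_run k i t0 t1.
Proof.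
move=> [_ _ gap] t0_lt.
pose ends s := (t0 <= s) && ((s.+1 < k) ==> (nth 0 i s + 3 <= nth 0 i s.+1)).
have ends_last : ends k.-1 by apply/andP; split; [lia | apply/implyP; lia].
case: (ex_minnP (ex_intro ends _ ends_last)) => t1 /andP [t0_le t1_end] t1_min.
exists t1; split.
- by have := t1_min _ ends_last; lia.
- move=> s /andP [t0_s s_t1]; have := gap s; have := t1_min s.
  by rewrite /ends t0_s /=; case: (s.+1 < k) => /=; case: leqP; lia.
- exact/implyP.
Qed.

Definition shift_run (t0 t1 : nat) (i : seq nat) : seq nat :=
  [seq (if t0 <= t <= t1 then (nth 0 i t).+1 else nth 0 i t) | t <- iota 0 (size i)].

Lemma size_shift_run t0 t1 i : size (shift_run t0 t1 i) = size i.
Proof. by rewrite size_map size_iota. Qed.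

Lemma nth_shift_run t0 t1 i t : t < size i ->
  nth 0 (shift_run t0 t1 i) t = (if t0 <= t <= t1 then (nth 0 i t).+1 else nth 0 i t).
Proof. by move=> t_lt; rewrite (nth_map 0) ?size_iota // nth_iota. Qed.

(* Shifting a maximal tight run keeps all gaps >= 2, since the gap after t1 is >= 3. *)
Lemma starts_shift_run k lo n i t0 t1 : starts k lo n i -> tight_run k i t0 t1 ->
  (forall t, t0 <= t <= t1 -> nth 0 i t < n - 1) -> starts k lo n (shift_run t0 t1 i).
Proof.
move=> [size_i bound gap] [run_range _ run_end] run_room.
split; first by rewrite size_shift_run.
- move=> t t_lt; rewrite nth_shift_run ?size_i //.
  by have := bound t t_lt; have := run_room t; case: ifP; lia.
- move=> t t_lt; rewrite !nth_shift_run ?size_i; try lia.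
  have := gap t t_lt.
  case in_t: (t0 <= t <= t1); case in_next: (t0 <= t.+1 <= t1); try lia.
  have t_end : t = t1 by lia.
  by rewrite t_end in t_lt *; have := run_end t_lt; lia.
Qed.

(* If i_{t0} is not needed, the shifted vector still covers sigma: inside the
   run, i_s (s > t0) equals i_{s-1} + 2, the successor of the shifted i_{s-1}. *)
Lemma cover_shift_run k i t0 t1 (sig : seq nat) : size i = k -> tight_run k i t0 t1 ->
  nth 0 i t0 \notin sig -> {subset sig <= pairs_of i} ->
  {subset sig <= pairs_of (shift_run t0 t1 i)}.
Proof.
move=> size_i [run_range run_tight _] t0_out cover a a_in.
have [s s_lt a_at] := mem_pairs_of (cover a a_in).
have mem_shift u : u < k -> let b := nth 0 (shift_run t0 t1 i) u in
    b \in pairs_of (shift_run t0 t1 i) /\ b.+1 \in pairs_of (shift_run t0 t1 i).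
  by move=> u_lt; apply: pairs_of_mem; rewrite size_shift_run size_i.
rewrite size_i in s_lt.
case in_run: (t0 <= s <= t1); last first.
  have [at_s next_s] := mem_shift s s_lt; rewrite nth_shift_run ?size_i // in_run in at_s next_s.
  by case: a_at => ->.
case: a_at => [a_eq | ->]; last first.
  by have [at_s _] := mem_shift s s_lt; rewrite nth_shift_run ?size_i // in_run in at_s.
have s_ne : s != t0 by apply: contraNneq t0_out => <-; rewrite -a_eq.
have prev_lt : s.-1 < k by lia.
have [_ next_prev] := mem_shift _ prev_lt.
rewrite nth_shift_run ?size_i // (_ : t0 <= s.-1 <= t1) in next_prev; last by lia.
have := run_tight s.-1 ltac:(lia); rewrite (_ : s.-1.+1 = s); last by lia.
by move=> prev_eq; rewrite a_eq prev_eq addn2.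
Qed.

Lemma deficit_shift_run n k i t0 t1 : size i = k -> t0 <= t1 < k -> nth 0 i t0 < n ->
  deficit n k (shift_run t0 t1 i) < deficit n k i.
Proof.
move=> size_i run_range t0_room; have t0_lt : t0 < k by lia.
rewrite /deficit (bigD1 (Ordinal t0_lt)) //= [X in _ < X](bigD1 (Ordinal t0_lt)) //=.
rewrite -addSn leq_add //.
  by rewrite nth_shift_run ?size_i // leqnn /=; case: ifP; lia.
apply: leq_sum => t _; rewrite nth_shift_run ?size_i //; case: ifP => _; lia.
Qed.

Lemma free_start k lo n i (sig : seq nat) : starts k lo n i -> size sig < k ->
  exists2 t0, t0 < k & nth 0 i t0 \notin sig.
Proof.
move=> st sig_size; have [size_i _ _] := st.
have [all_in | /allPn [a a_in a_out]] := boolP (all (mem sig) i).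
  have := uniq_leq_size (starts_uniq st) (fun a a_in => allP all_in a a_in).
  by rewrite size_i leqNgt sig_size.
have [t0 t0_lt a_eq] := nthP 0 a_in.
by exists t0; [rewrite -size_i | rewrite a_eq].
Qed.

Lemma shift_step k n i j (sig : seq nat) : starts k 1 n i -> size sig < k ->
  {subset sig <= pairs_of i} -> (forall t, t < k -> nth 0 i t < nth 0 j t <= n - 1) ->
  exists i', [/\ starts k 1 n i', (forall t, t < k -> nth 0 i' t <= nth 0 j t),
                 {subset sig <= pairs_of i'} & deficit n k i' < deficit n k i].
Proof.
move=> st sig_size cover below_j; have [size_i _ _] := st.
have [t0 t0_lt t0_out] := free_start st sig_size.
have [t1 run] := exists_tight_run st t0_lt; have [run_range _ _] := run.
exists (shift_run t0 t1 i); split.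
- by apply: starts_shift_run => // t t_run; have := below_j t; lia.
- by move=> t t_lt; rewrite nth_shift_run ?size_i //; have := below_j t t_lt; case: ifP; lia.
- exact: cover_shift_run run t0_out cover.
- by apply: deficit_shift_run => //; have := below_j t0 t0_lt; lia.
Qed.

Section Descent.

Variables (k n : nat) (S : seq nat -> Prop).
Hypothesis S_in_F : forall x, S x -> inF k n x.
Variable sig : seq nat.
Hypothesis sig_size : size sig < k.

Lemma face_from_ideal i : starts k 1 n i -> idealF k n S (pairs_of i) ->
  {subset sig <= pairs_of i} -> face_of (facetB_S k n S) sig.
Proof.
have [m lt_m] := ubnP (deficit n k i).
elim: m i lt_m => // m IH i lt_m st ideal cover.
have [shifted | not_shifted] := classic (idealF k n (shift1 S) (pairs_of i)); last first.
  by exists (pairs_of i).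
case: shifted => _ [_ [x Sx [_ ->]] le_shift].
have [j [size_j bound_j _ x_eq]] := S_in_F Sx.
have [size_i bound_i _] := st.
have below_j t : t < k -> nth 0 i t < nth 0 j t <= n - 1.
  move=> t_lt; have := bound_j t t_lt; have := bound_i t t_lt.
  have size_ij : size i = size j by rewrite size_i size_j.
  rewrite x_eq in le_shift; have := le_p_shifted_pairs_of size_ij le_shift.
  by rewrite size_i => /(_ t t_lt); lia.
have [i' [st' le_j cover' deficit_lt]] := shift_step st sig_size cover below_j.
apply: (IH i') => //; first by lia.
split; first exact: starts_inF.
have [size_i' _ _] := st'.
by exists x => //; rewrite x_eq; apply: le_p_pairs_of; rewrite size_i' ?size_j.
Qed.

End Descent.

Lemma top_set_pairs k n :
  [:: 1; 2] ++ iota (n - 2 * k + 3) (2 * k - 2) =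
  pairs_of (1 :: progression (n - 2 * k + 3) k.-1).
Proof. by rewrite pairs_of_cons pairs_of_progression; congr [:: _, _ & iota _ _]; lia. Qed.

Lemma le_p_top k n ir : starts k.-1 3 n ir ->
  le_p (pairs_of (1 :: ir)) (pairs_of (1 :: progression (n - 2 * k + 3) k.-1)).
Proof.
move=> st; have [size_ir bound _] := st.
apply: le_p_pairs_of; first by rewrite /= size_ir size_map size_iota.
case=> [|t] //=; rewrite size_ir => t_lt.
rewrite (nth_map 0) ?size_iota // nth_iota //.
by have := starts_top st t_lt; have := bound t t_lt; lia.
Qed.

Lemma cover_front ir (sig : seq nat) : (forall a, a \in sig -> 0 < a) ->
  {subset [seq a <- sig | 2 < a] <= pairs_of ir} -> {subset sig <= pairs_of (1 :: ir)}.
Proof.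
move=> sig_pos cover a a_in; rewrite pairs_of_cons !inE.
case: (ltnP 2 a) => [a_gt | a_le]; first by rewrite cover ?orbT // mem_filter a_gt.
by have := sig_pos a a_in; case: (ltngtP a 1); lia.
Qed.

Theorem lemma3p14 (k n : nat) (S : seq nat -> Prop) :
  1 <= k -> 2 * k <= n ->
  antichainF k n S ->
  S ([:: 1; 2] ++ iota (n - 2 * k + 3) (2 * k - 2)) ->
  neighborly (k - 1) n (face_of (facetB_S k n S)).
Proof.
move=> k_pos room [S_in_F _] S_top sig _ sig_range sig_size.
have sig_size' : size sig < k by lia.
have high_range a : a \in [seq a <- sig | 2 < a] -> 3 <= a <= n.
  by rewrite mem_filter => /andP [a_gt /sig_range]; lia.
have high_size : size [seq a <- sig | 2 < a] <= k.-1.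
  by rewrite size_filter (leq_trans (count_size _ _)) //; lia.
have [ir st_ir cover_ir] :=
  cover_by_starts (n := n) (k := k.-1) (lo := 3) isT ltac:(lia) high_range high_size.
have st : starts k 1 n (1 :: ir).
  by rewrite -(prednK k_pos); apply: starts_cons st_ir; lia.
apply: (face_from_ideal S_in_F sig_size' st).
- split; first exact: starts_inF.
  exists ([:: 1; 2] ++ iota (n - 2 * k + 3) (2 * k - 2)) => //.
  by rewrite top_set_pairs; exact: le_p_top.
- by apply: cover_front cover_ir => a /sig_range; lia.
Qed.
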